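(* Let $f:\mathbb{R}^d\to\mathbb{R}^d$ be a diffeomorphism. Let $\mathcal{C}$ denote the set of non-empty compact subsets of $\mathbb{R}^d$, let $d:\mathcal{C}\times\mathcal{C}\to[0,\infty)$ be any metric on $\mathcal{C}$, and define $E:\mathcal{C}\to[0,\infty)$ by $E(X)=d(X,f(X))$. For $r>0$ let $B_r(0)$ be the ball of radius $r$ centered at $0$, and for a compact set $Q\subset\mathbb{R}^d$ let $\mathrm{Inv}(Q)=\{x\in Q \mid f^k(x)\in Q \text{ for all } k\in\mathbb{Z}\}$ be the maximal invariant set in $Q$. Suppose that there is $S\in\mathcal{C}$ such that $\mathrm{Inv}(B_r(0))=S$ for all sufficiently large $r$. Then $S$ is the unique minimizer of $E$ on $\mathcal{C}$ which is maximal with respect to the partial order given by set inclusion $\subseteq$.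
   Context: A set $X\subset\mathbb{R}^d$ is called invariant if $X=f(X)$. Since $d$ is a metric, $E(X)=0$ if and only if $X$ is invariant. *)

From HB Require Import structures.
From mathcomp Require Import all_boot all_order all_algebra.
From mathcomp Require Import all_classical all_reals all_analysis.
Set Implicit Arguments. Unset Strict Implicit. Unset Printing Implicit Defensive.
Import Order.TTheory GRing.Theory Num.Theory.
Import numFieldNormedType.Exports.
Local Open Scope classical_set_scope.
Local Open Scope ring_scope.

Definition C1 (R : realType) (d : nat) (f : 'rV[R]_d -> 'rV[R]_d) : Prop :=
  (forall x, differentiable f x) /\
  (forall v : 'rV[R]_d, continuous (fun x => 'D_v f x)).

Definition diffeo (R : realType) (d : nat) (f g : 'rV[R]_d -> 'rV[R]_d) : Prop :=
  cancel f g /\ cancel g f /\ C1 f /\ C1 g.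

Definition fpow (T : Type) (f g : T -> T) (k : int) : T -> T :=
  match k with
  | Posz n => iter n f
  | Negz n => iter n.+1 g
  end.

Definition Ccal (R : realType) (d : nat) : set (set 'rV[R]_d) :=
  [set X | compact X /\ X !=set0].
Arguments Ccal : clear implicits.

Definition is_metric_on (T : Type) (R : realType) (C : set T) (dist : T -> T -> R) : Prop :=
  (forall X Y, C X -> C Y -> 0 <= dist X Y) /\
  (forall X Y, C X -> C Y -> (dist X Y = 0 <-> X = Y)) /\
  (forall X Y, C X -> C Y -> dist X Y = dist Y X) /\
  (forall X Y Z, C X -> C Y -> C Z -> dist X Z <= dist X Y + dist Y Z).

Definition eball (R : realType) (d : nat) (r : R) : set 'rV[R]_d :=
  [set x | \sum_(i < d) (x ord0 i) ^+ 2 <= r ^+ 2].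
Arguments eball {R} d r.

Definition maxInv (R : realType) (d : nat) (f g : 'rV[R]_d -> 'rV[R]_d)
  (Q : set 'rV[R]_d) : set 'rV[R]_d :=
  [set x | Q x /\ forall k : int, Q (fpow f g k x)].

Definition energy (R : realType) (d : nat) (f : 'rV[R]_d -> 'rV[R]_d)
  (dist : set 'rV[R]_d -> set 'rV[R]_d -> R) (X : set 'rV[R]_d) : R :=
  dist X (f @` X).

Definition is_minimizer (R : realType) (d : nat) (f : 'rV[R]_d -> 'rV[R]_d)
  (dist : set 'rV[R]_d -> set 'rV[R]_d -> R) (X : set 'rV[R]_d) : Prop :=
  Ccal R d X /\ forall Y, Ccal R d Y -> energy f dist X <= energy f dist Y.

Definition is_maximal_minimizer (R : realType) (d : nat) (f : 'rV[R]_d -> 'rV[R]_d)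
  (dist : set 'rV[R]_d -> set 'rV[R]_d -> R) (X : set 'rV[R]_d) : Prop :=
  is_minimizer f dist X /\
  forall Y, is_minimizer f dist Y -> X `<=` Y -> Y = X.

From HB Require Import structures.
From mathcomp Require Import all_boot all_order all_algebra.
From mathcomp Require Import all_classical all_reals all_analysis.
From mathcomp Require Import lra.
Set Implicit Arguments. Unset Strict Implicit. Unset Printing Implicit Defensive.
Import Order.TTheory GRing.Theory Num.Theory.
Import numFieldNormedType.Exports.
Local Open Scope classical_set_scope.
Local Open Scope ring_scope.

(* Since d is a metric, E >= 0 and E(X) = 0 exactly when f(X) = X; as the
   invariant set S has energy 0, the minimizers of E are exactly the invariant
   non-empty compact sets.  Every such set lies in some large ball B_r(0), and
   an invariant subset of B_r(0) lies in Inv(B_r(0)) = S.  Hence S is the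
   greatest minimizer, so it is maximal and every maximal minimizer equals S. *)

Section Orbits.
Variables (T : Type) (f g : T -> T).
Hypotheses (fK : cancel f g) (gK : cancel g f).

Lemma fpow_f (k : int) (x : T) : fpow f g k (f x) = fpow f g (k + 1) x.
Proof.
case: k => [n|[|n]] /=.
- by rewrite addn1 iterSr.
- by rewrite fK.
- by rewrite subn1 /= -[g (iter n g _)]/(iter n.+1 g (f x)) iterSr fK.
Qed.

Lemma fpow_g (k : int) (x : T) : fpow f g k (g x) = fpow f g (k - 1) x.
Proof. by rewrite -[in RHS](gK x) fpow_f subrK. Qed.

Lemma fpow_closed (P : T -> Prop) :
  (forall x, P x -> P (f x)) -> (forall x, P x -> P (g x)) ->
  forall k x, P x -> P (fpow f g k x).
Proof.
move=> Pf Pg [] n x Px /=; first by elim: n => //= n /Pf.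
by elim: n => [|n IH] /=; apply: Pg.
Qed.

Lemma image_invariant_closed (X : set T) :
  f @` X = X -> (forall x, X x -> X (f x)) /\ (forall x, X x -> X (g x)).
Proof.
move=> fX; split=> x Xx; first by rewrite -fX; exists x.
by move: Xx; rewrite -[X in X x]fX => -[y Xy <-]; rewrite fK.
Qed.

End Orbits.

Section MaximalInvariantSet.
Variables (R : realType) (d : nat) (f g : 'rV[R]_d -> 'rV[R]_d).
Hypotheses (fK : cancel f g) (gK : cancel g f).

Lemma maxInvE (Q : set 'rV[R]_d) x :
  maxInv f g Q x <-> forall k : int, Q (fpow f g k x).
Proof. by split=> [[]//|Qk]; split=> //; exact: (Qk 0). Qed.

Lemma maxInv_f Q x : maxInv f g Q x -> maxInv f g Q (f x).
Proof. by rewrite !maxInvE => Qk k; rewrite fpow_f. Qed.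

Lemma maxInv_g Q x : maxInv f g Q x -> maxInv f g Q (g x).
Proof. by rewrite !maxInvE => Qk k; rewrite fpow_g. Qed.

Lemma image_maxInv Q : f @` maxInv f g Q = maxInv f g Q.
Proof.
rewrite eqEsubset; split; first by move=> _ [x Qx <-]; exact: maxInv_f.
by move=> x Qx; exists (g x); [exact: maxInv_g | exact: gK].
Qed.

Lemma invariant_sub_maxInv (X Q : set 'rV[R]_d) :
  f @` X = X -> X `<=` Q -> X `<=` maxInv f g Q.
Proof.
move=> /(image_invariant_closed fK) [Xf Xg] XQ x Xx; apply/maxInvE => k.
exact/XQ/(fpow_closed Xf Xg).
Qed.

End MaximalInvariantSet.

Lemma Ccal_image (R : realType) (d : nat) (f : 'rV[R]_d -> 'rV[R]_d) X :
  continuous f -> Ccal R d X -> Ccal R d (f @` X).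
Proof.
move=> fcont [cX [x Xx]]; split; last by exists (f x), x.
by apply: continuous_compact => //; exact: continuous_subspaceT.
Qed.

Section Energy.
Variables (R : realType) (d : nat) (f : 'rV[R]_d -> 'rV[R]_d).
Variable dist : set 'rV[R]_d -> set 'rV[R]_d -> R.
Hypothesis dist_metric : is_metric_on (Ccal R d) dist.
Hypothesis Ccal_f : forall X, Ccal R d X -> Ccal R d (f @` X).

Lemma energy_ge0 X : Ccal R d X -> 0 <= energy f dist X.
Proof. by move=> CX; apply: dist_metric.1 => //; exact: Ccal_f. Qed.

Lemma energy_eq0 X : Ccal R d X -> energy f dist X = 0 <-> f @` X = X.
Proof.
move=> CX; rewrite (dist_metric.2.1 _ _ CX (Ccal_f CX)).
by split=> /esym.
Qed.

Lemma minimizer_invariant S X : Ccal R d S -> f @` S = S ->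
  is_minimizer f dist X <-> Ccal R d X /\ f @` X = X.
Proof.
move=> CS fS; have ES : energy f dist S = 0 by apply/energy_eq0.
split=> [[CX minX]|[CX fX]]; last first.
  by split=> // Y CY; rewrite (proj2 (energy_eq0 CX) fX) energy_ge0.
split=> //; apply/energy_eq0 => //; apply/eqP.
by rewrite eq_le energy_ge0 // andbT -ES minX.
Qed.

End Energy.

Lemma greatest_minimizer_maximal (R : realType) (d : nat)
    (f : 'rV[R]_d -> 'rV[R]_d) (dist : set 'rV[R]_d -> set 'rV[R]_d -> R) S :
  is_minimizer f dist S -> (forall Y, is_minimizer f dist Y -> Y `<=` S) ->
  is_maximal_minimizer f dist S /\
  (forall X, is_maximal_minimizer f dist X -> X = S).
Proof.
move=> minS geS; split.
  by split=> // Y /geS YS SY; rewrite eqEsubset.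
by move=> X [minX maxX]; apply/esym/maxX => //; exact: geS.
Qed.

Lemma rV_coord_le_norm (R : realType) (d : nat) (x : 'rV[R]_d) i :
  `|x ord0 i| <= `|x|.
Proof.
rewrite [leRHS]/Num.norm /= mx_normrE.
exact: (le_bigmax _ (fun ij : 'I_1 * 'I_d => `|x ij.1 ij.2|) (ord0, i)).
Qed.

Lemma norm_le_eball (R : realType) (d : nat) (x : 'rV[R]_d) (M r : R) :
  `|x| <= M -> d%:R * M ^+ 2 + 1 <= r -> eball d r x.
Proof.
move=> xM rM; have M0 : 0 <= M := le_trans (normr_ge0 x) xM.
apply: (@le_trans _ _ (\sum_(i < d) M ^+ 2)).
  apply: ler_sum => i _; have := le_trans (rV_coord_le_norm x i) xM.
  by rewrite ler_norml => /andP[? ?]; nra.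
have dM0 : 0 <= d%:R * M ^+ 2 :> R by rewrite mulr_ge0 ?sqr_ge0.
by rewrite sumr_const card_ord -mulr_natl; nra.
Qed.

Lemma compact_sub_eball (R : realType) (d : nat) (X : set 'rV[R]_d) :
  compact X -> exists r0 : R, forall r, r0 < r -> X `<=` eball d r.
Proof.
move=> /compact_bounded [M0 [_ XM]]; set M := Num.max M0 0 + 1.
have M0M : M0 < M by rewrite /M ltr_pwDr // le_max lexx.
exists (d%:R * M ^+ 2 + 1) => r /ltW rM x Xx.
exact: norm_le_eball (XM M M0M x Xx) rM.
Qed.

Theorem mainTheorem1 (R : realType) (d : nat) (f g : 'rV[R]_d -> 'rV[R]_d)
  (dist : set 'rV[R]_d -> set 'rV[R]_d -> R) (S : set 'rV[R]_d) :
  diffeo f g ->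
  is_metric_on (Ccal R d) dist ->
  Ccal R d S ->
  (exists r0 : R, forall r : R, r0 < r -> maxInv f g (eball d r) = S) ->
  is_maximal_minimizer f dist S /\
  (forall X, is_maximal_minimizer f dist X -> X = S).
Proof.
move=> [fK [gK [[fdiff _] _]]] dist_metric CS [r0 maxInvS].
have fcont : continuous f by move=> x; exact: differentiable_continuous.
have Ccal_f := fun X => @Ccal_image R d f X fcont.
have fS : f @` S = S by rewrite -(maxInvS (r0 + 1)) ?ltrDl // image_maxInv.
have minimizerP X := minimizer_invariant dist_metric Ccal_f X CS fS.
apply: greatest_minimizer_maximal; first exact/minimizerP.
move=> Y /minimizerP [[cY _] fY].
have [r1 Y_ball] := compact_sub_eball cY.
have r_gt : r0 < Num.max r0 r1 + 1 /\ r1 < Num.max r0 r1 + 1.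
  by rewrite !ltr_pwDr // ?le_max lexx ?orbT.
rewrite -(maxInvS _ r_gt.1); apply: (invariant_sub_maxInv fK fY).
exact: Y_ball r_gt.2.
Qed.
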